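(* Let $G$ be a non-trivial Polish group such that for every infinite $S\subseteq\mathbb N$ the set $\mathbb A(S)=\{g\in G: \exists s\in S\ g^s=1\}$ is dense in $G$. Then every topological similarity class of $G$ is meagre. Moreover, for every infinite $S\subseteq\mathbb N$ the set $$\mathbb C(S)=\{g\in G:\ \text{there is a sequence } (s_n)\subseteq S \text{ with } g^{s_n}\to 1\}$$ is a dense $G_\delta$ subset of $G$ that is invariant under topological similarity.
   Context: Two elements $f,g$ of a Polish group $G$ are topologically similar if the cyclic subgroups $\langle f\rangle$ and $\langle g\rangle$, with the subspace topologies from $G$, are isomorphic as topological groups. A topological similarity class is an equivalence class of this relation. *)

From HB Require Import structures.
From mathcomp Require Import all_boot all_order all_algebra.
From mathcomp Require Import all_classical all_reals all_analysis borel_hierarchy.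
From mathcomp Require Import Rstruct Rstruct_topology.

Set Implicit Arguments.
Unset Strict Implicit.
Unset Printing Implicit Defensive.

Import Order.TTheory GRing.Theory Num.Theory.
Import numFieldNormedType.Exports.
Local Open Scope classical_set_scope.
Local Open Scope ring_scope.

Notation Real := Rdefinitions.R.

Definition is_metric (T : Type) (d : T -> T -> Real) :=
  [/\ forall x y, 0 <= d x y,
      forall x y, d x y = 0 <-> x = y,
      forall x y, d x y = d y x &
      forall x y z, d x z <= d x y + d y z].

Definition metric_compatible (T : topologicalType) (d : T -> T -> Real) :=
  forall A : set T, open A <->
    (forall x, A x -> exists2 e : Real, 0 < e & [set y | d x y < e] `<=` A).

Definition metric_complete (T : topologicalType) (d : T -> T -> Real) :=
  forall u : nat -> T,
    (forall e : Real, 0 < e -> exists N, forall m n, (N <= m)%N -> (N <= n)%N ->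
        d (u m) (u n) < e) ->
    exists l : T, u @ \oo --> l.

Definition separable_space (T : topologicalType) :=
  exists D : set T, countable D /\ dense D.

Definition polish_space (T : topologicalType) :=
  separable_space T /\
  exists d : T -> T -> Real,
    [/\ is_metric d, metric_compatible d & metric_complete d].

Definition is_topological_group (T : topologicalType)
    (mul : T -> T -> T) (inv : T -> T) (one : T) :=
  [/\ forall x y z, mul x (mul y z) = mul (mul x y) z,
      forall x, mul one x = x /\ mul x one = x,
      forall x, mul (inv x) x = one /\ mul x (inv x) = one,
      continuous (fun p : T * T => mul p.1 p.2) &
      continuous inv].

Definition is_polish_group (T : topologicalType)
    (mul : T -> T -> T) (inv : T -> T) (one : T) :=
  polish_space T /\ is_topological_group mul inv one.

Definition gpow (T : Type) (mul : T -> T -> T) (one : T) (g : T) (n : nat) : T :=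
  iter n (mul g) one.

Definition gzpow (T : Type) (mul : T -> T -> T) (inv : T -> T) (one : T)
    (g : T) (z : int) : T :=
  match z with
  | Posz n => gpow mul one g n
  | Negz n => inv (gpow mul one g n.+1)
  end.

Definition cyclic_subgroup (T : Type) (mul : T -> T -> T) (inv : T -> T) (one : T)
    (g : T) : set T :=
  range (gzpow mul inv one g).

(* f and g are topologically similar: <f> and <g>, with the subspace
   topologies, are isomorphic as topological groups, i.e. there are mutually
   inverse maps between <f> and <g>, the first a group homomorphism, both
   continuous for the subspace topologies. *)
Definition top_similar (T : topologicalType)
    (mul : T -> T -> T) (inv : T -> T) (one : T) (f g : T) :=
  let Cf := cyclic_subgroup mul inv one f in
  let Cg := cyclic_subgroup mul inv one g in
  exists phi psi : T -> T,
    [/\ forall x, Cf x -> Cg (phi x),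
        forall y, Cg y -> Cf (psi y),
        forall x, Cf x -> psi (phi x) = x &
        forall y, Cg y -> phi (psi y) = y] /\
    [/\ forall x y, Cf x -> Cf y -> phi (mul x y) = mul (phi x) (phi y),
        {within Cf, continuous phi} &
        {within Cg, continuous psi}].

Definition nowhere_dense (T : topologicalType) (A : set T) :=
  interior (closure A) = set0.

Definition meagre (T : topologicalType) (A : set T) :=
  exists F : (set T)^nat, (forall i, nowhere_dense (F i)) /\ A `<=` \bigcup_i F i.

Definition setA_S (T : Type) (mul : T -> T -> T) (one : T) (S : set nat) : set T :=
  [set g | exists2 s, S s & gpow mul one g s = one].

Definition setC_S (T : topologicalType) (mul : T -> T -> T) (one : T)
    (S : set nat) : set T :=
  [set g | exists s : nat -> nat, (forall n, S (s n)) /\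
             (fun n => gpow mul one g (s n)) @ \oo --> one].

From HB Require Import structures.
From mathcomp Require Import all_boot all_order all_algebra.
From mathcomp Require Import all_classical all_reals all_analysis borel_hierarchy.
From mathcomp Require Import finmap lra Rstruct Rstruct_topology.
Import Order.TTheory GRing.Theory Num.Theory.
Local Open Scope classical_set_scope.

(* C(S) is the intersection over k of the open sets of those g having some
   power g^s, s in S, within 1/(k+1) of 1, so it is G_delta, and it contains
   the dense set A(S).  A topological isomorphism of cyclic subgroups
   transports a convergence g^(s_n) --> 1, so C(S) is a union of similarity
   classes.  If f <> 1 then f^n does not tend to 1 (G is Hausdorff), hence
   f is not in C(S) for S the infinite set of n with f^n outside a fixed
   neighbourhood of 1, and the class of f lies in the meagre complement of
   C(S).  The class of 1 is {1}, which is nowhere dense: an isolated identity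
   would make a nontrivial g isolated, yet g is a limit of elements of
   A({n | g^n <> 1}). *)

Lemma unbounded_nat_infinite (A : set nat) :
  (forall N, exists2 n, (N <= n)%N & A n) -> infinite_set A.
Proof.
move=> unbA finA; have [n Nn An] := unbA (\max_(x <- fset_set A) x).+1.
suff : (n <= \max_(x <- fset_set A) x)%N by rewrite leqNgt Nn.
by apply: (@leq_bigmax_seq _ _ _ id) => //; rewrite in_fset_set // mem_set.
Qed.

Section GroupPowers.
Context {T : Type} {mul : T -> T -> T} {inv : T -> T} {one : T}.
Hypothesis mulA : forall x y z, mul x (mul y z) = mul (mul x y) z.
Hypothesis mul1 : forall x, mul one x = x /\ mul x one = x.
Hypothesis mulV : forall x, mul (inv x) x = one /\ mul x (inv x) = one.
Local Notation gp := (gpow mul one).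
Local Notation gz := (gzpow mul inv one).
Local Notation Cyc := (cyclic_subgroup mul inv one).

Lemma gpowS g n : gp g n.+1 = mul g (gp g n). Proof. by []. Qed.

Lemma gpowD g m n : gp g (m + n) = mul (gp g m) (gp g n).
Proof.
elim: m => [|m IH]; first by rewrite add0n /= (mul1 _).1.
by rewrite addSn !gpowS IH mulA.
Qed.

Lemma gpowSr g n : gp g n.+1 = mul (gp g n) g.
Proof. by rewrite -addn1 gpowD /= (mul1 _).2. Qed.

Lemma gpowM g m n : gp g (m * n) = gp (gp g m) n.
Proof. by elim: n => [|n IH]; rewrite ?muln0 // mulnS gpowD IH. Qed.

Lemma gpow1n n : gp one n = one.
Proof. by elim: n => //= n ->; rewrite (mul1 _).1. Qed.

Lemma mul_cancel_l x y z : mul x y = mul x z -> y = z.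
Proof.
by move=> xyz; rewrite -[y](mul1 _).1 -[z](mul1 _).1 -(mulV x).1 -!mulA xyz.
Qed.

Lemma inv_unique a b : mul a b = one -> b = inv a.
Proof. by move=> ab1; apply: (@mul_cancel_l a); rewrite ab1 (mulV _).2. Qed.

Lemma inv_mul x y : inv (mul x y) = mul (inv y) (inv x).
Proof.
symmetry; apply: inv_unique.
by rewrite -mulA [mul y _]mulA (mulV y).2 (mul1 _).1 (mulV x).2.
Qed.

Lemma inv1 : inv one = one.
Proof. by symmetry; apply: inv_unique; rewrite (mul1 _).1. Qed.

Lemma gpowV g n : gp (inv g) n = inv (gp g n).
Proof.
elim: n => [|n IH]; first by rewrite /= inv1.
by rewrite gpowS IH gpowSr inv_mul.
Qed.

Lemma gzpowN g m : gz g (- (m%:Z))%R = inv (gp g m).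
Proof. by case: m => [|m]; rewrite ?inv1 // -NegzE. Qed.

Lemma gpow_gzpow g w k : gp (gz g w) k = gz g (w * k%:Z)%R.
Proof.
case: w => n; first by rewrite -PoszM; exact: esym (gpowM _ _ _).
change (gp (inv (gp g n.+1)) k = gz g (Negz n * k%:Z)%R).
by rewrite gpowV -gpowM NegzE mulNr -PoszM gzpowN.
Qed.

Lemma gzpow_gpow g a w : gz (gp g a) w = gz g (a%:Z * w)%R.
Proof.
case: w => n; first by rewrite -PoszM; exact: esym (gpowM _ _ _).
change (inv (gp (gp g a) n.+1) = gz g (a%:Z * Negz n)%R).
by rewrite NegzE mulrN -PoszM gzpowN gpowM.
Qed.

Lemma gpow_gzpowC g w s : gp (gz g w) s = gz (gp g s) w.
Proof. by rewrite gpow_gzpow gzpow_gpow mulrC. Qed.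

Lemma gzpow1n w : gz one w = one.
Proof.
case: w => n; first exact: gpow1n.
by change (inv (gp one n.+1) = one); rewrite gpow1n inv1.
Qed.

Lemma cyclic_subgroup1 g : Cyc g one.
Proof. by exists 0%R. Qed.

Lemma cyclic_subgroup_id g : Cyc g g.
Proof. by exists 1%R => //; exact: (mul1 g).2. Qed.

Lemma cyclic_subgroup_gpow g x k : Cyc g x -> Cyc g (gp x k).
Proof. by case=> w _ <-; rewrite gpow_gzpow; exists (w * k%:Z)%R. Qed.

Lemma cyclic_subgroup_one : Cyc one = [set one].
Proof.
apply/seteqP; split => [_ [w _ <-]|_ ->]; last exact: cyclic_subgroup1.
exact: gzpow1n.
Qed.

Lemma infinite_nontrivial_gpow g : g <> one -> infinite_set [set n | gp g n <> one].
Proof.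
move=> g1; apply: unbounded_nat_infinite => N.
have [gN1|] := pselect (gp g N.+1 = one); last by exists N.+1.
exists N.+2; first exact: leqW (leqnSn N).
by change (gp g N.+2 <> one); rewrite gpowS gN1 (mul1 _).2.
Qed.

Section CyclicHom.
Variables (f : T) (phi : T -> T).
Hypothesis phiM : forall x y, Cyc f x -> Cyc f y -> phi (mul x y) = mul (phi x) (phi y).

Lemma cyclic_hom1 : phi one = one.
Proof.
have := phiM one one (cyclic_subgroup1 f) (cyclic_subgroup1 f).
rewrite (mul1 one).1 => phi11; symmetry; apply: (@mul_cancel_l (phi one)).
by rewrite (mul1 _).2.
Qed.

Lemma cyclic_hom_gpow x k : Cyc f x -> phi (gp x k) = gp (phi x) k.
Proof.
move=> fx; elim: k => [|k IH]; first exact: cyclic_hom1.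
by rewrite !gpowS phiM ?IH //; exact: cyclic_subgroup_gpow.
Qed.

End CyclicHom.

End GroupPowers.

Local Open Scope ring_scope.

Section MetricTopology.
Context {T : topologicalType} {d : T -> T -> Rdefinitions.R}.
Hypothesis dm : is_metric d.
Hypothesis dc : metric_compatible d.

Lemma metric_ball_open x e : open [set y | d x y < e].
Proof.
have [_ _ _ tri] := dm; apply/dc => y dxy.
exists (e - d x y) => [|z /= dyz]; first by rewrite subr_gt0.
by have := tri x y z; lra.
Qed.

Lemma metric_ball_nbhs x {e} : 0 < e -> nbhs x [set y | d x y < e].
Proof.
have [_ d0 _ _] := dm => e0; apply: open_nbhs_nbhs; split.
  exact: metric_ball_open.
by rewrite /= (d0 x x).2.
Qed.

Lemma metric_nbhs_ball x V : nbhs x V -> exists2 e, 0 < e & [set y | d x y < e] `<=` V.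
Proof.
rewrite nbhsE => -[B [oB Bx] BV].
by have [e e0 eB] := (dc B).1 oB x Bx; exists e => // y /eB /BV.
Qed.

Lemma metric_hausdorff : hausdorff_space T.
Proof.
move=> p q pq; apply: contrapT => npq; have [d_ge0 d0 dC tri] := dm.
have dpq : 0 < d p q / 2.
  by rewrite divr_gt0 // lt_def d_ge0 andbT; apply/eqP => /d0.
have [z [/= pz qz]] := pq _ _ (metric_ball_nbhs p dpq) (metric_ball_nbhs q dpq).
by have := tri p z q; rewrite (dC z q); lra.
Qed.

End MetricTopology.

Local Close Scope ring_scope.

Section Category.
Variable T : topologicalType.

Lemma sub_meagre (A B : set T) : A `<=` B -> meagre B -> meagre A.
Proof. by move=> AB [F [Fnd BF]]; exists F; split => // x /AB /BF. Qed.

Lemma nowhere_dense_meagre (A : set T) : nowhere_dense A -> meagre A.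
Proof. by move=> Af; exists (fun=> A); split => // x Ax; exists 0%N. Qed.

Lemma denseS (A B : set T) : A `<=` B -> dense A -> dense B.
Proof.
move=> AB dA O O0 oO; have [x [Ox Ax]] := dA O O0 oO.
by exists x; split => //; apply: AB.
Qed.

Lemma open_dense_compl_nowhere_dense (U : set T) :
  open U -> dense U -> nowhere_dense (~` U).
Proof.
move=> oU dU; rewrite /nowhere_dense -(closure_id _).1; last exact: open_closedC.
apply/seteqP; split => // x; rewrite /interior /= nbhsE => -[B [oB Bx] BU].
by have [y [By Uy]] := dU B (ex_intro _ x Bx) oB; exact: BU y By Uy.
Qed.

Lemma Gdelta_dense_compl_meagre (A : set T) : Gdelta A -> dense A -> meagre (~` A).
Proof.
move=> [F oF ->] dA; exists (fun k => ~` F k); split => [k|x Fx].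
  apply: open_dense_compl_nowhere_dense (oF k) _.
  by apply: denseS dA => y; apply.
apply: contrapT => nFx; apply: Fx => k _; apply: contrapT => Fkx.
by apply: nFx; exists k.
Qed.

End Category.

Lemma setA_S_subset_setC_S (T : topologicalType) (mul : T -> T -> T) (one : T)
    (S : set nat) :
  setA_S mul one S `<=` setC_S mul one S.
Proof.
by move=> g [s Ss gs1]; exists (fun=> s); split => //; rewrite gs1; exact: cvg_cst.
Qed.

Lemma cvg_gpow_of_setC_S (T : topologicalType) (mul : T -> T -> T) (one f : T) :
  (forall S, infinite_set S -> setC_S mul one S f) ->
  gpow mul one f @ \oo --> one.
Proof.
move=> fC V V1; apply: contrapT => nV.
have infS : infinite_set [set n | ~ V (gpow mul one f n)].
  apply: unbounded_nat_infinite => N; apply: contrapT => farN; apply: nV.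
  by exists N => // n /= Nn; apply: contrapT => Vn; apply: farN; exists n.
have [s [Ss /(_ V V1) [N _ sV]]] := fC _ infS.
exact: Ss N (sV N (leqnn N)).
Qed.

Section TopologicalGroup.
Context {T : topologicalType} {mul : T -> T -> T} {inv : T -> T} {one : T}.
Hypothesis mulA : forall x y z, mul x (mul y z) = mul (mul x y) z.
Hypothesis mul1 : forall x, mul one x = x /\ mul x one = x.
Hypothesis mulV : forall x, mul (inv x) x = one /\ mul x (inv x) = one.
Hypothesis mul_cont : continuous (fun p : T * T => mul p.1 p.2).
Hypothesis inv_cont : continuous inv.
Local Notation gp := (gpow mul one).
Local Notation gz := (gzpow mul inv one).
Local Notation Cyc := (cyclic_subgroup mul inv one).
Local Notation C := (setC_S mul one).

Lemma continuous_gpow n : continuous (gp ^~ n).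
Proof.
elim: n => [|n IH] x; first exact: cst_continuous.
apply: (@continuous2_cvg _ _ _ _ _ _ id (gp ^~ n) mul x (gp x n)).
- exact: (@mul_cont (x, gp x n)).
- exact: cvg_id.
- exact: IH.
Qed.

Lemma continuous_gzpow w : continuous (gz ^~ w).
Proof.
case: w => n; first exact: continuous_gpow.
move=> x; apply: (continuous_comp (f := gp ^~ n.+1) (g := inv)).
  exact: continuous_gpow.
exact: inv_cont.
Qed.

Lemma setC_S_transport (f x : T) (a : T -> T) (S : set nat) :
  {within Cyc f, continuous a} -> a one = one ->
  (forall y k, Cyc f y -> a (gp y k) = gp (a y) k) ->
  Cyc f x -> C S f -> C S (a x).
Proof.
move=> a_cont a1 a_gpow fx [s [Ss fs1]]; exists s; split => //.
have [w _ xE] := fx.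
have xs1 : (fun n => gz (gp f (s n)) w) @ \oo --> one.
  have := continuous_cvg eventually_filter (continuous_gzpow w one) fs1.
  by rewrite (gzpow1n mulA mul1 mulV).
have xs1_within : (fun n => gz (gp f (s n)) w) @ \oo --> within (Cyc f) (nbhs one).
  move=> W /= /xs1 [N _ sW]; exists N => // n /sW /=; apply.
  by rewrite -(gpow_gzpowC mulA mul1 mulV) xE; exact: cyclic_subgroup_gpow.
have := cvg_comp _ a xs1_within ((subspace_continuousP _ _).1 a_cont one
  (cyclic_subgroup1 f)).
rewrite /from_subspace a1.
suff -> : (fun n => gp (a x) (s n)) = a \o (fun n => gz (gp f (s n)) w) by [].
by apply/funext => n /=; rewrite -(gpow_gzpowC mulA mul1 mulV) xE a_gpow.
Qed.

Lemma top_similar_setC_S (f g : T) (S : set nat) :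
  top_similar mul inv one f g -> C S f <-> C S g.
Proof.
move=> [phi [psi [[phiC psiC psiphi phipsi] [phiM phi_cont psi_cont]]]].
have ff := cyclic_subgroup_id (inv := inv) mul1 f.
have gg := cyclic_subgroup_id (inv := inv) mul1 g.
have phi1 := cyclic_hom1 mulA mul1 mulV f phi phiM.
have psi1 : psi one = one by rewrite -{1}phi1 psiphi //; exact: cyclic_subgroup1.
have psi_gpow y k : Cyc g y -> psi (gp y k) = gp (psi y) k.
  move=> gy; have fy := psiC y gy.
  rewrite -{1}(phipsi y gy) -(cyclic_hom_gpow mulA mul1 mulV f phi phiM) // psiphi //.
  exact: cyclic_subgroup_gpow.
split => [Cf | Cg].
  rewrite -(phipsi g gg); apply: setC_S_transport phi_cont phi1 _ (psiC g gg) Cf.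
  exact: cyclic_hom_gpow mulA mul1 mulV f phi phiM.
by rewrite -(psiphi f ff); apply: setC_S_transport psi_cont psi1 psi_gpow (phiC f ff) Cg.
Qed.

Lemma top_similar_oneE (g : T) : top_similar mul inv one one g -> g = one.
Proof.
move=> [phi [psi [[_ psiC _ phipsi] _]]].
have psi_one y : Cyc g y -> psi y = one.
  by move=> /psiC; rewrite (cyclic_subgroup_one mulA mul1 mulV).
have gg := cyclic_subgroup_id (inv := inv) mul1 g.
have g1 : Cyc g one := cyclic_subgroup1 g.
by rewrite -(phipsi g gg) psi_one // -{2}(phipsi one g1) psi_one.
Qed.

Lemma nbhs_set1_translate (g : T) : nbhs one [set one] -> nbhs g [set g].
Proof.
move=> one_isolated.
have shift_cvg : mul (inv g) x @[x --> g] --> one.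
  rewrite -(mulV g).1.
  exact: continuous2_cvg (@mul_cont (inv g, g)) (cvg_cst _) cvg_id.
have shift_one : nbhs g [set y | mul (inv g) y = one] := shift_cvg _ one_isolated.
apply: filterS shift_one => y /= gy1.
by rewrite -[y](mul1 y).1 -(mulV g).2 -mulA gy1 (mul1 _).2.
Qed.

Lemma gpow_cvg1_eq1 (f : T) : hausdorff_space T ->
  gp f @ \oo --> one -> f = one.
Proof.
move=> hT f_cvg1.
have fS_cvg1 : (fun n => gp f n.+1) @ \oo --> one.
  by move=> V /f_cvg1 [N _ fV]; exists N => // n Nn; apply/fV/leqW.
have fS_cvgf : (fun n => gp f n.+1) @ \oo --> f.
  rewrite -[X in _ --> X](mul1 f).2.
  exact: continuous2_cvg (@mul_cont (f, one)) (cvg_cst _) f_cvg1.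
exact: (@cvg_unique _ hT _ _ _ _ fS_cvgf fS_cvg1).
Qed.

Lemma exists_not_setC_S (f : T) : hausdorff_space T -> f <> one ->
  exists2 S, infinite_set S & ~ C S f.
Proof.
move=> hT f1; apply: contrapT => noS; apply/f1/gpow_cvg1_eq1 => //.
apply: cvg_gpow_of_setC_S => S infS; apply: contrapT => nCf.
by apply: noS; exists S.
Qed.

Lemma nowhere_dense_set1_one : hausdorff_space T -> (exists g, g <> one) ->
  (forall S, infinite_set S -> dense (setA_S mul one S)) -> nowhere_dense [set one].
Proof.
move=> hT [g g1] A_dense.
rewrite /nowhere_dense -(closure_id _).1; last first.
  exact/accessible_closed_set1/hausdorff_accessible.
apply/seteqP; split => // x one_nbhs.
have x1 : x = one := nbhs_singleton one_nbhs.
rewrite {}x1 in one_nbhs; have g_isolated := nbhs_set1_translate g one_nbhs.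
have [y [gy [s Ss ys1]]] := A_dense _ (infinite_nontrivial_gpow mul1 g g1)
  [set g]° (ex_intro _ g g_isolated) (@open_interior _ _).
by apply: Ss; rewrite -(nbhs_singleton gy).
Qed.

Section MetricGroup.
Context {d : T -> T -> Rdefinitions.R}.
Hypothesis dm : is_metric d.
Hypothesis dc : metric_compatible d.

Definition small_pow_set (S : set nat) (k : nat) : set T :=
  \bigcup_(s in S) (gp ^~ s @^-1` [set y | d one y < k.+1%:R^-1]%R).

Lemma open_small_pow_set S k : open (small_pow_set S k).
Proof.
apply: bigcup_open => s _; apply: (continuousP _).1; first exact: continuous_gpow.
exact: metric_ball_open.
Qed.

Lemma setC_S_bigcap S : C S = \bigcap_k small_pow_set S k.
Proof.
apply/seteqP; split => [g [s [Ss gs1]] k _|g gS].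
  have k_pos : (0 < (k.+1%:R : Rdefinitions.R)^-1)%R by rewrite invr_gt0 ltr0Sn.
  have [N _ sN] := gs1 _ (metric_ball_nbhs dm dc one k_pos).
  by exists (s N) => //; exact: sN N (leqnn N).
have /choice [s sS] k : exists s, S s /\ (d one (gp g s) < k.+1%:R^-1)%R.
  by have [s Ss gs] := gS k I; exists s.
exists s; split => [n|V /(metric_nbhs_ball dc) [e e0 eV]]; first exact: (sS n).1.
have [N _ Ne] := near_infty_natSinv_lt (PosNum e0).
by exists N => // n Nn; apply/eV/(lt_trans (sS n).2)/Ne.
Qed.

Lemma Gdelta_setC_S S : Gdelta (C S).
Proof.
by exists (small_pow_set S); [exact: open_small_pow_set | exact: setC_S_bigcap].
Qed.

Lemma meagre_top_similar_class (f : T) : (exists g, g <> one) ->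
  (forall S, infinite_set S -> dense (setA_S mul one S)) ->
  meagre [set g | top_similar mul inv one f g].
Proof.
move=> nontrivial A_dense; have hT := metric_hausdorff dm dc.
have [->|f1] := pselect (f = one).
  apply: (@sub_meagre _ _ [set one]) => [g /top_similar_oneE //|].
  exact/nowhere_dense_meagre/nowhere_dense_set1_one.
have [S infS nCf] := exists_not_setC_S f hT f1.
apply: (@sub_meagre _ _ (~` C S)) => [g fg Cg|].
  exact/nCf/(top_similar_setC_S _ _ S fg).
apply: Gdelta_dense_compl_meagre (Gdelta_setC_S S) _.
exact: denseS (@setA_S_subset_setC_S _ _ _ S) (A_dense S infS).
Qed.

End MetricGroup.

End TopologicalGroup.

Theorem mainTheorem13 (T : topologicalType)
    (mul : T -> T -> T) (inv : T -> T) (one : T) :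
  is_polish_group mul inv one ->
  (exists g : T, g <> one) ->
  (forall S : set nat, infinite_set S -> dense (setA_S mul one S)) ->
  (forall f : T, meagre [set g | top_similar mul inv one f g]) /\
  (forall S : set nat, infinite_set S ->
     [/\ dense (setC_S mul one S),
         Gdelta (setC_S mul one S) &
         forall g h : T, top_similar mul inv one g h ->
           setC_S mul one S g -> setC_S mul one S h]).
Proof.
move=> [[_ [d [dm dc _]]] [mulA mul1 mulV mul_cont inv_cont]] nontrivial A_dense.
split=> [f|S infS].
  exact (meagre_top_similar_class mulA mul1 mulV mul_cont inv_cont dm dc f
    nontrivial A_dense).
split.
- exact: denseS (@setA_S_subset_setC_S _ _ _ S) (A_dense S infS).
- exact (Gdelta_setC_S mul_cont dm dc S).
- move=> g h gh.
  exact: (top_similar_setC_S mulA mul1 mulV mul_cont inv_cont _ _ S gh).1.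
Qed.
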